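(* Let $\mathcal{H}$ be an index set, let $S_{\text{def}}$ be a random defining dataset with realization $s$, and for each $h\in\mathcal{H}$ let $\theta_h\in\mathbb{R}$ be an unknown estimand, $\hat\theta_h=\hat\theta_h(s)$ an estimate computed from $S_{\text{def}}$, and $e_h:=\theta_h-\hat\theta_h$ the error. Let $\mathcal{E}(s):=\{(h,\hat\theta_h,\theta_h,e_h):h\in\mathcal{H}\}$, and given $S_{\text{def}}=s$ let $S_{\text{err}}\sim\mathcal{D}$ be an error estimation dataset. Fix $h^*:=\arg\max_{h\in\mathcal{H}}\theta_h\in\mathcal{H}$. Suppose (i) there is a constant $c$ with $c\le\max_{h}\theta_h$, and (ii) there are functions $\hat u(S_{\text{err}},h,\delta)\in\mathbb{R}$ such that for every $\delta\in(0,1)$, $\Pr_{S_{\text{err}}\sim\mathcal{D}}\big(e_{h^*}\le \hat u(S_{\text{err}},h^*,\delta)\,\big|\,\mathcal{E}(s)\big)\ge 1-\delta$. Let $\mathcal{H}_0:=\mathcal{H}$ and define inductively, for $k\ge 0$, $$\hat\xi_k(S_{\text{err}},\delta):=\max_{h\in\mathcal{H}_k(S_{\text{err}})}\hat u(S_{\text{err}},h,\delta),\qquad \mathcal{H}_{k+1}(S_{\text{err}}):=\big\{h\in\mathcal{H} : -\hat\theta_h\le \hat\xi_k(S_{\text{err}},\delta)-c\big\}.$$ Then for any $\delta\in(0,1)$, $$\Pr_{(S_{\text{def}},S_{\text{err}})}\Big(\hat\xi_k(S_{\text{err}},\delta)\ge e_{h^*}\ \ \forall k\in\mathbb{N}\Big)\ge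 1-\delta .$$
   Context: Conditioning on $\mathcal{E}(s)$ means conditioning on the realization $S_{\text{def}}=s$; the distribution $\mathcal{D}$ of $S_{\text{err}}$ may depend on $s$, and $S_{\text{err}}$ is not used to construct the estimates $\hat\theta_h$. Maxima over the classes $\mathcal{H}_k$ are assumed to exist. *)

From HB Require Import structures.
From mathcomp Require Import all_boot all_order all_algebra.
From mathcomp Require Import all_classical all_reals all_analysis.
Set Implicit Arguments. Unset Strict Implicit. Unset Printing Implicit Defensive.
Import Order.TTheory GRing.Theory Num.Theory.
Local Open Scope classical_set_scope.
Local Open Scope ring_scope.
Local Open Scope ereal_scope.

(* Law of the pair (S_def, S_err) when S_def ~ mu and, given S_def = s,
   S_err ~ D s  (semidirect product mu (x) D):
   P((S_def,S_err) \in A) = \int[mu]_s D s {y | (s,y) \in A}. *)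
Definition joint_prob d d' (X : measurableType d) (Y : measurableType d')
  (R : realType) (mu : probability X R) (D : R.-pker X ~> Y)
  (A : set (X * Y)) : \bar R :=
  \int[mu]_s D s (xsection A s).

(* Maxima are taken as suprema in the extended reals (they coincide with
   the maxima whenever the latter exist). *)
Fixpoint Hset (H Y : Type) (R : realType) (u : Y -> H -> R -> R)
  (thetahat : H -> R) (c delta : R) (y : Y) (k : nat) : set H :=
  match k with
  | 0%N => setT
  | k'.+1 => [set h | (- thetahat h)%:E <=
       ereal_sup [set (u y h' delta)%:E | h' in Hset u thetahat c delta y k']
       - c%:E]
  end.

Definition xi (H Y : Type) (R : realType) (u : Y -> H -> R -> R)
  (thetahat : H -> R) (c delta : R) (y : Y) (k : nat) : \bar R :=
  ereal_sup [set (u y h delta)%:E | h in Hset u thetahat c delta y k].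

From HB Require Import structures.
From mathcomp Require Import all_boot all_order all_algebra.
From mathcomp Require Import all_classical all_reals all_analysis.
From mathcomp Require Import lra.
Import Order.TTheory GRing.Theory Num.Theory.
Local Open Scope classical_set_scope.
Local Open Scope ring_scope.

(* Whenever the bound at h* covers its error e, h* itself satisfies the
   elimination test of every round, since -thetahat h* <= u h* - c follows
   from e <= u h* and c <= theta h*.  Hence h* survives in every H_k, and
   every xi_k, a supremum over H_k, dominates u h* >= e.  The event
   "e <= u h*" has conditional probability >= 1 - delta for each
   realization s, so integrating over s gives the joint bound. *)

Section nested_bounds.
Variables (H Y : Type) (R : realType) (u : Y -> H -> R -> R).
Variables (thetahat : H -> R) (c delta : R) (y : Y).

Lemma Hset_le_xi {k h} : Hset u thetahat c delta y k h ->
  ((u y h delta)%:E <= xi u thetahat c delta y k)%E.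
Proof. by move=> hk; apply: ereal_sup_ubound; exists h. Qed.

Lemma Hset_survivor {h} : c - thetahat h <= u y h delta ->
  forall k, Hset u thetahat c delta y k h.
Proof.
move=> hcert; elim=> [//|k IHk].
change ((- thetahat h)%:E <= xi u thetahat c delta y k - c%:E)%E.
apply: le_trans _ (leeB (Hset_le_xi IHk) (lexx _)).
by rewrite -EFinB lee_fin; lra.
Qed.

Lemma le_xi {h e} : c - thetahat h <= u y h delta -> e <= u y h delta ->
  forall k, (e%:E <= xi u thetahat c delta y k)%E.
Proof.
move=> hcert he k; apply: le_trans _ (Hset_le_xi (Hset_survivor hcert k)).
by rewrite lee_fin.
Qed.

End nested_bounds.

Lemma measurable_fun_c_infty d (T : measurableType d) (R : realType)
    (f : T -> R) a :
  measurable_fun setT f -> measurable [set x | a <= f x].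
Proof.
by move=> mf; rewrite -preimage_itvcy -[X in measurable X]setTI; exact: mf.
Qed.

Lemma joint_prob_ge d d' (X : measurableType d) (Y : measurableType d')
    (R : realType) (mu : probability X R) (D : R.-pker X ~> Y)
    (A : set (X * Y)) (r : R) :
  measurable A -> 0 <= r -> (forall s, r%:E <= D s (xsection A s))%E ->
  (r%:E <= joint_prob mu D A)%E.
Proof.
move=> mA r0 hsec; rewrite /joint_prob.
have -> : r%:E = (\int[mu]_(s in setT) (cst r%:E) s)%E.
  rewrite integral_cst // -[LHS]mule1; congr (_ * _)%E.
  exact/esym/probability_setT.
apply: (@ge0_le_integral _ _ _ mu setT measurableT) => //.
by apply: measurable_fun_xsection_finite_kernel; rewrite inE.
Qed.

Theorem corollary2p5
  (R : realType) (d d' : measure_display)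
  (X : measurableType d) (Y : measurableType d')
  (mu : probability X R) (D : R.-pker X ~> Y)
  (H : Type) (theta : H -> R) (thetahat : X -> H -> R)
  (hstar : H) (hstar_max : forall h, theta h <= theta hstar)
  (c : R) (hc : c <= theta hstar)
  (u : Y -> H -> R -> R)
  (hu_meas : forall delta, 0 < delta < 1 ->
     measurable_fun setT (fun y => u y hstar delta))
  (hu : forall (s : X) (delta : R), 0 < delta < 1 ->
     ((1 - delta)%:E <=
       D s [set y | (theta hstar - thetahat s hstar <= u y hstar delta)%R])%E)
  (hevent_meas : forall delta, 0 < delta < 1 ->
     measurable [set sy : X * Y | forall k : nat,
       ((theta hstar - thetahat sy.1 hstar)%:E <=
         xi u (thetahat sy.1) c delta sy.2 k)%E])
  (delta : R) (hdelta : 0 < delta < 1) :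
  ((1 - delta)%:E <=
    joint_prob mu D [set sy : X * Y | forall k : nat,
       ((theta hstar - thetahat sy.1 hstar)%:E <=
         xi u (thetahat sy.1) c delta sy.2 k)%E])%E.
Proof.
have [_ delta1] := andP hdelta.
apply: joint_prob_ge; [exact: hevent_meas | by rewrite subr_ge0 ltW |].
move=> s; apply: le_trans (hu s delta hdelta) _.
apply: le_measure; rewrite ?inE.
- exact: measurable_fun_c_infty (hu_meas _ hdelta).
- exact: measurable_xsection (hevent_meas _ hdelta).
- move=> y /= he; rewrite /xsection /= inE /=.
  have hcert : c - thetahat s hstar <= u y hstar delta by lra.
  exact: le_xi hcert he.
Qed.
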